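(* Let $W\in\mathcal{P}(\mathcal{Y}|\mathcal{X})$ be a symmetric and singular channel with no all-zero column, and fix $x_{\mathrm o}\in\mathcal{X}$ and $\epsilon\in(0,1)$. (i) For every $x\in\mathcal{X}$ and $\lambda\in\mathbb{R}$, $M_x(\lambda)=M_{x_{\mathrm o}}(\lambda)$. (ii) For all $x\in\mathcal{X}$: $\mathrm{E}_{W(\cdot|x)}[\ln\frac{W(Y|x)}{q(Y)}]=\mathrm{E}_{W(\cdot|x_{\mathrm o})}[\ln\frac{W(Y|x_{\mathrm o})}{q(Y)}]=C(W)$; $\mathrm{Var}_{W(\cdot|x)}[\ln\frac{W(Y|x)}{q(Y)}]=\mathrm{Var}_{W(\cdot|x_{\mathrm o})}[\ln\frac{W(Y|x_{\mathrm o})}{q(Y)}]=:V(W)$ and $V(W)=V_\epsilon(W)$; and $m_3(x)=m_3(x_{\mathrm o})$. (iii) For every $R\ge0$, every $(N,R)$ code with ideal feedback and every message $m$, $P_{\mathbf{Y}^N|M}\{\mathcal{S}(R)\mid m\}=W\{\mathcal{S}(R)\mid\mathbf{x}_{\mathrm o}^N\}$, where $\mathbf{x}_{\mathrm o}^N$ is the all-$x_{\mathrm o}$ sequence. (iv) $\mathrm{E}_q[-\ln\alpha_Y]=C(W)$, $\mathrm{Var}_q[-\ln\alpha_Y]=V(W)$ and $\mathrm{E}_q[|-\ln\alpha_Y-C(W)|^3]=m_3(x_{\mathrm o})$.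
   Context: $\mathcal{X},\mathcal{Y}$ finite. Symmetric (Gallager): outputs partitionable into subsets within each of which every row of the transition submatrix is a permutation of every other row and every column of every other column. Singular: $W(y|x)W(y|z)>0$ implies $W(y|x)=W(y|z)$. $q(y)=\sum_x\frac1{|\mathcal{X}|}W(y|x)$; $\alpha_y=\sum_{x:W(y|x)>0}\frac1{|\mathcal{X}|}$; $M_x(\lambda)=\mathrm{E}_{W(\cdot|x)}[e^{\lambda\ln\frac{W(Y|x)}{q(Y)}}]$; $m_3(x)=\mathrm{E}_{W(\cdot|x)}[|\ln\frac{W(Y|x)}{q(Y)}-C(W)|^3]$; $C(W)$ is the capacity. For $P\in\mathcal{P}(\mathcal{X})$, $q_P(y)=\sum_xP(x)W(y|x)$, $V(P,W)=\sum_{x,y}P(x)W(y|x)[\ln\frac{W(y|x)}{q_P(y)}-\sum_bW(b|x)\ln\frac{W(b|x)}{q_P(b)}]^2$, $V_\epsilon(W)=\min_{Q:I(Q;W)=C(W)}V(Q,W)$ for $\epsilon<1/2$ and the corresponding max for $\epsilon\ge1/2$. $\mathcal{S}(R)=\{\mathbf{y}^N:\frac1N\sum_n\ln\frac1{\alpha_{y_n}}\le R\}$. A code with ideal feedback has message set $\{1,\dots,\lceil e^{NR}\rceil\}$, encoders $f_n:\mathcal{M}\times\mathcal{Y}^{n-1}\to\mathcal{X}$, and $P_{\mathbf{Y}^N|M}(\mathbf{y}^N|m)=\prod_nW(y_n|f_n(m,\mathbf{y}^{n-1}))$. *)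

From HB Require Import structures.
From mathcomp Require Import all_boot all_order all_algebra.
From mathcomp Require Import all_classical all_reals all_analysis.
Set Implicit Arguments. Unset Strict Implicit. Unset Printing Implicit Defensive.
Import Order.TTheory GRing.Theory Num.Theory.
Local Open Scope ring_scope.


Section Channel.
Variables (R : realType) (X Y : finType).
(* A channel is W : X -> Y -> R with W x y = W(y|x). *)
Implicit Types (W : X -> Y -> R) (P : X -> R).

Definition is_channel W :=
  (forall x y, 0 <= W x y) /\ (forall x, \sum_(y : Y) W x y = 1).

Definition is_dist P := (forall x, 0 <= P x) /\ \sum_(x : X) P x = 1.

Definition gallager_symmetric W :=
  exists Part : {set {set Y}}, finset.partition Part [set: Y] /\
    forall B, B \in Part ->
      (forall x x', perm_eq [seq W x y | y in B] [seq W x' y | y in B]) /\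
      (forall y y', y \in B -> y' \in B ->
         perm_eq [seq W x y | x : X] [seq W x y' | x : X]).

Definition singular W :=
  forall x z y, 0 < W x y * W z y -> W x y = W z y.

Definition no_zero_column W := forall y, exists x, 0 < W x y.

Definition qP W P (y : Y) : R := \sum_(x : X) P x * W x y.

Definition unif : X -> R := fun _ => (#|X|%:R)^-1.

Definition qunif W (y : Y) : R := \sum_(x : X) (#|X|%:R)^-1 * W x y.

Definition alpha W (y : Y) : R :=
  \sum_(x : X | 0 < W x y) (#|X|%:R)^-1.

Definition MI W P : R :=
  \sum_(x : X) \sum_(y : Y) P x * W x y * ln (W x y / qP W P y).

Definition capacity W : R := sup [set r | exists P, is_dist P /\ r = MI W P]%classic.

Definition Vcond W P : R :=
  \sum_(x : X) \sum_(y : Y) P x * W x y *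
    (ln (W x y / qP W P y) -
     \sum_(b : Y) W x b * ln (W x b / qP W P b)) ^+ 2.

Definition Veps (eps : R) W : R :=
  let S := [set v | exists Q, [/\ is_dist Q, MI W Q = capacity W & v = Vcond W Q]]%classic in
  if eps < 2^-1 then inf S else sup S.

Definition idens W (x : X) (y : Y) : R := ln (W x y / qunif W y).

Definition mgf W (x : X) (lam : R) : R :=
  \sum_(y : Y) W x y * expR (lam * idens W x y).

Definition mean_id W (x : X) : R := \sum_(y : Y) W x y * idens W x y.

Definition var_id W (x : X) : R :=
  \sum_(y : Y) W x y * (idens W x y - mean_id W x) ^+ 2.

Definition m3 W (x : X) : R :=
  \sum_(y : Y) W x y * `|idens W x y - capacity W| ^+ 3.

Definition msg_card (N : nat) (Rt : R) : nat := `|Num.ceil (expR (N%:R * Rt))|%N.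

(* A code with ideal feedback of blocklength N and M messages: encoder at time
   n (0-based) maps the message and the past outputs y_0 .. y_{n-1} to an
   input letter. *)
Definition fb_encoder (N M : nat) := 'I_N -> 'I_M -> seq Y -> X.

Definition fb_law W (N M : nat) (f : fb_encoder N M) (m : 'I_M)
    (y : N.-tuple Y) : R :=
  \prod_(n < N) W (f n m (take n y)) (tnth y n).

Definition Sset W (N : nat) (Rt : R) : pred (N.-tuple Y) :=
  fun y => (N%:R)^-1 * \sum_(n < N) ln ((alpha W (tnth y n))^-1) <= Rt.

Definition memoryless W (N : nat) (xs : N.-tuple X) (y : N.-tuple Y) : R :=
  \prod_(n < N) W (tnth xs n) (tnth y n).

End Channel.

From HB Require Import structures.
From mathcomp Require Import all_boot all_order all_algebra.
From mathcomp Require Import all_classical all_reals all_analysis.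
From mathcomp.algebra_tactics Require Import lra.
Set Implicit Arguments. Unset Strict Implicit. Unset Printing Implicit Defensive.
Import Order.TTheory GRing.Theory Num.Theory.
Local Open Scope ring_scope.

(* Singularity makes the information density on the support of W(.|x) equal
   to -ln alpha_y, a function of the output alone, and Gallager symmetry makes
   every row W(.|x) give the same total mass to each level set of alpha.  Hence
   every statistic of the information density, and every statistic of
   alpha_{Y_1}, ..., alpha_{Y_N} under feedback (by induction on N, peeling
   off the first output), is independent of the inputs.  The capacity equals
   the common mean because I(P;W) = E[i] - D(q_P || q) and the uniform input
   gives q_P = q; any capacity-achieving Q has q_Q = q on its support (equality
   in Gibbs' inequality), so V(Q,W) is the common variance. *)

Section Gibbs.
Variable R : realType.

Lemma ln_le_subr1 (t : R) : 0 < t -> ln t <= t - 1.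
Proof.
by move=> t_gt0; have := @le_ln1Dx R (t - 1); rewrite addrCA subrr addr0; apply; lra.
Qed.

Lemma ln_lt_subr1 (t : R) : 0 < t -> t != 1 -> ln t < t - 1.
Proof.
move=> t_gt0 t_neq1; have lnt_neq0 : ln t != 0 by rewrite ln_eq0.
by have := expR_gt1Dx lnt_neq0; rewrite lnK ?posrE // => ?; lra.
Qed.

Lemma mul_ln_div_le (p q : R) : 0 <= p -> 0 < q -> p * ln (q / p) <= q - p.
Proof.
move=> p_ge0 q_gt0; have [->|p_neq0] := eqVneq p 0; first by rewrite mul0r subr0 ltW.
have p_gt0 : 0 < p by rewrite lt_def p_neq0.
have := ler_wpM2l p_ge0 (ln_le_subr1 (divr_gt0 q_gt0 p_gt0)).
by rewrite mulrBr mulr1 mulrCA mulfV ?mulr1.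
Qed.

Lemma mul_ln_div_eq (p q : R) : 0 < p -> 0 < q -> p * ln (q / p) = q - p -> p = q.
Proof.
move=> p_gt0 q_gt0 eq_pq; have [qp_eq1|qp_neq1] := eqVneq (q / p) 1.
  by rewrite -[q](divfK (lt0r_neq0 p_gt0)) qp_eq1 mul1r.
have := ln_lt_subr1 (divr_gt0 q_gt0 p_gt0) qp_neq1; rewrite -(ltr_pM2l p_gt0).
by rewrite mulrBr mulr1 mulrCA mulfV ?gt_eqF // mulr1 eq_pq ltxx.
Qed.

Variables (I : finType) (p q : I -> R).
Hypotheses (p_ge0 : forall i, 0 <= p i) (q_gt0 : forall i, 0 < q i).

Lemma gibbs_le : \sum_i p i * ln (q i / p i) <= \sum_i q i - \sum_i p i.
Proof. by rewrite -sumrB; apply: ler_sum => i _; exact: mul_ln_div_le. Qed.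

Lemma gibbs_eq : \sum_i p i * ln (q i / p i) = \sum_i q i - \sum_i p i ->
  forall i, 0 < p i -> p i = q i.
Proof.
move=> eq_sum i p_gt0.
have gap0 : \sum_j (q j - p j - p j * ln (q j / p j)) = 0 by rewrite !sumrB eq_sum subrr.
have gap_ge0 j : true -> 0 <= q j - p j - p j * ln (q j / p j).
  by move=> _; rewrite subr_ge0 mul_ln_div_le.
have /eqP := psumr_eq0P gap_ge0 gap0 (i := i) isT; rewrite subr_eq0 => /eqP gap_i.
by apply: mul_ln_div_eq => //; rewrite gap_i.
Qed.

End Gibbs.

Lemma big_tuple_cons (V : nmodType) (Y : finType) N (F : N.+1.-tuple Y -> V) :
  \sum_(t : N.+1.-tuple Y) F t = \sum_(y0 : Y) \sum_(t : N.-tuple Y) F [tuple of y0 :: t].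
Proof.
rewrite pair_bigA (reindex (fun p : Y * N.-tuple Y => [tuple of p.1 :: p.2])) /=.
  by apply: eq_bigr => -[].
exists (fun t : N.+1.-tuple Y => (thead t, [tuple of behead t])).
  by move=> [a t] _; congr pair; apply: val_inj.
by move=> t _; rewrite [RHS]tuple_eta.
Qed.

Lemma card_inv_gt0 (R : numFieldType) (X : finType) (x : X) : 0 < (#|X|%:R)^-1 :> R.
Proof. by rewrite invr_gt0 ltr0n; apply/card_gt0P; exists x. Qed.

Lemma sum_card_inv (R : numFieldType) (X : finType) (x : X) :
  \sum_(x' : X) (#|X|%:R)^-1 = 1 :> R.
Proof.
by rewrite sumr_const -[LHS]mulr_natr mulVf // gt_eqF // -invr_gt0 (card_inv_gt0 _ x).
Qed.

Section SymmetricChannel.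
Variables (R : realType) (X Y : finType) (W : X -> Y -> R).

Lemma alpha_perm_eq y y' :
  perm_eq [seq W x y | x : X] [seq W x y' | x : X] -> alpha W y = alpha W y'.
Proof.
move=> col_perm; rewrite /alpha !(big_mkcond (fun x => 0 < W x _)) /=.
have col_sum z : \sum_(x : X) (if 0 < W x z then (#|X|%:R)^-1 else 0 : R)
   = \sum_(v <- [seq W x z | x : X]) (if 0 < v then (#|X|%:R)^-1 else 0).
  by rewrite big_image.
by rewrite !col_sum (perm_big _ col_perm).
Qed.

Hypothesis W_sym : gallager_symmetric W.

(* On each block of the partition alpha is constant (the columns are
   permutations of each other) and all rows carry the same mass. *)
Lemma sum_row_alpha_indep x x' (F : R -> R) :
  \sum_(y : Y) W x y * F (alpha W y) = \sum_(y : Y) W x' y * F (alpha W y).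
Proof.
case: W_sym => Part [/and3P [/eqP coverT trivP _] blockP].
have sum_cover G : \sum_(y : Y) G y = \sum_(y in finset.cover Part) G y :> R.
  by apply: eq_bigl => y; rewrite coverT finset.in_setT.
rewrite !sum_cover !finset.big_trivIset //; apply: eq_bigr => B /blockP [rowP colP].
have [->|/finset.set0Pn [y0 By0]] := eqVneq B finset.set0; first by rewrite !big_set0.
have block_sum z : \sum_(y in B) W z y * F (alpha W y)
   = (\sum_(v <- [seq W z y | y in B]) v) * F (alpha W y0).
  rewrite big_image big_distrl; apply: eq_bigr => y By.
  by rewrite (alpha_perm_eq (colP y y0 By By0)).
by rewrite !block_sum (perm_big _ (rowP x x')).
Qed.

Lemma fb_law_cons N M (f : fb_encoder X Y N.+1 M) m y0 (t : N.-tuple Y) :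
  fb_law W f m [tuple of y0 :: t] =
  W (f ord0 m [::]) y0 * fb_law W (fun n m' s => f (lift ord0 n) m' (y0 :: s)) m t.
Proof.
by rewrite /fb_law big_ord_recl tnth0; congr (_ * _); apply: eq_bigr => n _; rewrite tnthS.
Qed.

Lemma sum_fb_law_alpha_indep N M M' (f : fb_encoder X Y N M) (f' : fb_encoder X Y N M')
    m m' (g : seq R -> R) :
  \sum_(y : N.-tuple Y) fb_law W f m y * g (map (alpha W) y)
  = \sum_(y : N.-tuple Y) fb_law W f' m' y * g (map (alpha W) y).
Proof.
elim: N M M' f f' m m' g => [|N IHN] M M' f f' m m' g.
  by apply: eq_bigr => y _; rewrite /fb_law !big_ord0.
pose f0 : fb_encoder X Y N M := fun _ _ _ => f ord0 m [::].
pose G c := \sum_(t : N.-tuple Y) fb_law W f0 m t * g (c :: map (alpha W) t).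
(* By induction, summing out all outputs but the first leaves a function of
   alpha of the first output only. *)
have peel M0 (h : fb_encoder X Y N.+1 M0) m0 :
    \sum_(y : N.+1.-tuple Y) fb_law W h m0 y * g (map (alpha W) y)
    = \sum_(y0 : Y) W (h ord0 m0 [::]) y0 * G (alpha W y0).
  rewrite big_tuple_cons; apply: eq_bigr => y0 _.
  under eq_bigr do rewrite fb_law_cons -mulrA.
  by rewrite -big_distrr (IHN _ _ _ f0 _ m (fun s => g (alpha W y0 :: s))).
by rewrite !peel; apply: sum_row_alpha_indep.
Qed.

Lemma sum_qunif_alpha x0 (F : R -> R) :
  \sum_(y : Y) qunif W y * F (alpha W y) = \sum_(y : Y) W x0 y * F (alpha W y).
Proof.
transitivity (\sum_(x : X) (#|X|%:R)^-1 * \sum_(y : Y) W x y * F (alpha W y)).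
  under [RHS]eq_bigr do rewrite big_distrr; rewrite exchange_big.
  by apply: eq_bigr => y _; rewrite /qunif big_distrl /=; apply: eq_bigr => x _; rewrite mulrA.
under eq_bigr do rewrite (sum_row_alpha_indep _ x0).
by rewrite -big_distrl /= (sum_card_inv _ x0) mul1r.
Qed.

Lemma sum_Sset_fb_law_memoryless N Rt M (f : fb_encoder X Y N M) m x0 :
  \sum_(y : N.-tuple Y | Sset W Rt y) fb_law W f m y
  = \sum_(y : N.-tuple Y | Sset W Rt y) memoryless W [tuple of nseq N x0] y.
Proof.
pose in_S (s : seq R) : R := if N%:R^-1 * \sum_(c <- s) ln c^-1 <= Rt then 1 else 0.
have Sset_mul (F : N.-tuple Y -> R) :
    \sum_(y | Sset W Rt y) F y = \sum_y F y * in_S (map (alpha W) y).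
  rewrite big_mkcond; apply: eq_bigr => y _.
  by rewrite /in_S big_map big_tuple /Sset; case: ifP => _; rewrite ?mulr1 ?mulr0.
rewrite !Sset_mul (sum_fb_law_alpha_indep f (fun _ _ _ => x0) m m).
by apply: eq_bigr => y _; congr (_ * _); apply: eq_bigr => n _; rewrite tnth_nseq.
Qed.

End SymmetricChannel.

Section SingularChannel.
Variables (R : realType) (X Y : finType) (W : X -> Y -> R).
Hypotheses (W_chan : is_channel W) (W_sing : singular W).

Lemma W_ge0 x y : 0 <= W x y. Proof. exact: W_chan.1. Qed.

Lemma alpha_gt0 x y : 0 < W x y -> 0 < alpha W y.
Proof.
move=> W_gt0; rewrite /alpha (bigD1 x) //=; apply: lt_le_trans (card_inv_gt0 _ x) _.
by rewrite lerDl sumr_ge0 // => i _; rewrite invr_ge0 ler0n.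
Qed.

Lemma qunif_alpha x y : 0 < W x y -> qunif W y = alpha W y * W x y.
Proof.
move=> W_gt0; rewrite /qunif /alpha big_distrl (bigID (fun x' => 0 < W x' y)) /=.
rewrite [X in _ + X]big1 ?addr0 => [|x' /negbTE W_le0].
  by apply: eq_bigr => x' W'_gt0; rewrite (W_sing (mulr_gt0 W'_gt0 W_gt0)).
suff -> : W x' y = 0 by rewrite mulr0.
by apply/eqP; rewrite eq_le W_ge0 andbT leNgt W_le0.
Qed.

Lemma mul_W_idens x y (F : R -> R) :
  W x y * F (idens W x y) = W x y * F (- ln (alpha W y)).
Proof.
have [->|W_neq0] := eqVneq (W x y) 0; first by rewrite !mul0r.
have W_gt0 : 0 < W x y by rewrite lt_def W_neq0 W_ge0.
rewrite /idens (qunif_alpha W_gt0) invfM mulrCA mulfV ?gt_eqF // mulr1.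
by rewrite lnV // posrE (alpha_gt0 W_gt0).
Qed.

Hypothesis W_sym : gallager_symmetric W.

Lemma sum_row_idens_indep x x' (F : R -> R) :
  \sum_(y : Y) W x y * F (idens W x y) = \sum_(y : Y) W x' y * F (idens W x' y).
Proof.
under eq_bigr do rewrite mul_W_idens.
rewrite (sum_row_alpha_indep W_sym x x' (fun a => F (- ln a))).
by under eq_bigr do rewrite -mul_W_idens.
Qed.

Lemma sum_qunif_ln_alpha x0 (F : R -> R) :
  \sum_(y : Y) qunif W y * F (- ln (alpha W y)) = \sum_(y : Y) W x0 y * F (idens W x0 y).
Proof.
rewrite (sum_qunif_alpha W_sym x0 (fun a => F (- ln a))).
by under eq_bigr do rewrite -mul_W_idens.
Qed.

Lemma mean_id_indep x x' : mean_id W x = mean_id W x'.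
Proof. exact: (sum_row_idens_indep x x' id). Qed.

Lemma var_id_indep x x' : var_id W x = var_id W x'.
Proof.
rewrite /var_id (mean_id_indep x x').
exact: (sum_row_idens_indep x x' (fun t => (t - mean_id W x') ^+ 2)).
Qed.

End SingularChannel.

Section Capacity.
Variables (R : realType) (X Y : finType) (W : X -> Y -> R).
Hypotheses (W_chan : is_channel W) (W_sing : singular W).
Hypotheses (W_sym : gallager_symmetric W) (W_col : no_zero_column W).
Variable x0 : X.
Implicit Type P : X -> R.

Lemma qunif_gt0 y : 0 < qunif W y.
Proof.
have [x W_gt0] := W_col y.
by rewrite (qunif_alpha W_chan W_sing W_gt0) mulr_gt0 // (alpha_gt0 W_gt0).
Qed.

Lemma qP_ge0 P y : is_dist P -> 0 <= qP W P y.
Proof. by move=> [P_ge0 _]; apply: sumr_ge0 => x _; rewrite mulr_ge0 // W_ge0. Qed.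

Lemma qP_ge_mul P x y : is_dist P -> P x * W x y <= qP W P y.
Proof.
move=> [P_ge0 _]; rewrite /qP (bigD1 x) //= lerDl.
by apply: sumr_ge0 => x' _; rewrite mulr_ge0 // W_ge0.
Qed.

Lemma sum_qP P : is_dist P -> \sum_(y : Y) qP W P y = 1.
Proof.
move=> [_ P_sum1]; rewrite /qP exchange_big /= -P_sum1; apply: eq_bigr => x _.
by rewrite -big_distrr /= W_chan.2 mulr1.
Qed.

Lemma unif_dist : is_dist (@unif R X).
Proof. by split; [move=> x'; rewrite /unif invr_ge0 ler0n | exact: sum_card_inv _ x0]. Qed.

Lemma sum_qunif : \sum_(y : Y) qunif W y = 1.
Proof. exact: sum_qP unif_dist. Qed.

Lemma MI_mean_id_divergence P : is_dist P ->
  MI W P = mean_id W x0 + \sum_(y : Y) qP W P y * ln (qunif W y / qP W P y).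
Proof.
move=> P_dist; have [P_ge0 P_sum1] := P_dist.
have split_ln x' y : P x' * W x' y * ln (W x' y / qP W P y)
    = P x' * W x' y * idens W x' y + P x' * W x' y * ln (qunif W y / qP W P y).
  have [->|PW_neq0] := eqVneq (P x' * W x' y) 0; first by rewrite !mul0r addr0.
  have PW_gt0 : 0 < P x' * W x' y by rewrite lt_def PW_neq0 mulr_ge0 // W_ge0.
  have W_gt0 : 0 < W x' y.
    by rewrite lt_def (W_ge0 W_chan) andbT; apply: contraNneq PW_neq0 => ->; rewrite mulr0.
  have qP_gt0 : 0 < qP W P y := lt_le_trans PW_gt0 (qP_ge_mul x' y P_dist).
  rewrite -mulrDr /idens -lnM ?posrE ?divr_gt0 ?qunif_gt0 //.
  by rewrite mulrA divfK // gt_eqF ?qunif_gt0.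
rewrite /MI; under eq_bigr do under eq_bigr do rewrite split_ln.
under eq_bigr do rewrite big_split /=; rewrite big_split /=; congr (_ + _).
  transitivity (\sum_(x' : X) P x' * mean_id W x0).
    apply: eq_bigr => x' _; rewrite -(mean_id_indep W_chan W_sing W_sym x' x0) big_distrr /=.
    by apply: eq_bigr => y _; rewrite mulrA.
  by rewrite -big_distrl /= P_sum1 mul1r.
by rewrite exchange_big /=; apply: eq_bigr => y _; rewrite -big_distrl.
Qed.

Lemma MI_le_mean_id P : is_dist P -> MI W P <= mean_id W x0.
Proof.
move=> P_dist; rewrite (MI_mean_id_divergence P_dist) gerDl.
have := gibbs_le (fun y => qP_ge0 y P_dist) qunif_gt0.
by rewrite sum_qP // sum_qunif subrr.
Qed.

Lemma MI_unif : MI W (@unif R X) = mean_id W x0.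
Proof.
rewrite (MI_mean_id_divergence unif_dist) big1 ?addr0 // => y _.
by rewrite [qP _ _ _]/= mulfV ?gt_eqF ?qunif_gt0 // ln1 mulr0.
Qed.

Lemma capacityE : capacity W = mean_id W x0.
Proof.
have MI_ub : ubound [set r | exists P, is_dist P /\ r = MI W P]%classic (mean_id W x0).
  by move=> r [P [P_dist ->]]; exact: MI_le_mean_id.
have MI_unif_mem : [set r | exists P, is_dist P /\ r = MI W P]%classic (mean_id W x0).
  by exists (@unif R X); split; [exact: unif_dist | rewrite MI_unif].
apply/eqP; rewrite eq_le ge_sup //=; last by exists (mean_id W x0).
by rewrite ub_le_sup //; exists (mean_id W x0).
Qed.

Lemma qP_capacity_achieving Q : is_dist Q -> MI W Q = capacity W ->
  forall y, 0 < qP W Q y -> qP W Q y = qunif W y.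
Proof.
move=> Q_dist MI_cap; apply: gibbs_eq (fun y => qP_ge0 y Q_dist) qunif_gt0 _.
rewrite sum_qP // sum_qunif subrr.
by have := MI_mean_id_divergence Q_dist; rewrite MI_cap capacityE; lra.
Qed.

Lemma Vcond_capacity_achieving Q : is_dist Q -> MI W Q = capacity W ->
  Vcond W Q = var_id W x0.
Proof.
move=> Q_dist MI_cap; rewrite /Vcond.
transitivity (\sum_(x : X) Q x * var_id W x); last first.
  under eq_bigr do rewrite (var_id_indep W_chan W_sing W_sym _ x0).
  by rewrite -big_distrl /= Q_dist.2 mul1r.
apply: eq_bigr => x _; have [->|Qx_neq0] := eqVneq (Q x) 0.
  by rewrite mul0r big1 // => y _; rewrite !mul0r.
have Qx_gt0 : 0 < Q x by rewrite lt_def Qx_neq0 Q_dist.1.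
have W_idens y (F : R -> R) : W x y * F (ln (W x y / qP W Q y)) = W x y * F (idens W x y).
  have [->|W_neq0] := eqVneq (W x y) 0; first by rewrite !mul0r.
  have W_gt0 : 0 < W x y by rewrite lt_def W_neq0 W_ge0.
  have qP_gt0 := lt_le_trans (mulr_gt0 Qx_gt0 W_gt0) (qP_ge_mul x y Q_dist).
  by rewrite /idens (qP_capacity_achieving Q_dist MI_cap qP_gt0).
have -> : \sum_(b : Y) W x b * ln (W x b / qP W Q b) = mean_id W x.
  by apply: eq_bigr => b _; rewrite (W_idens b id).
rewrite /var_id big_distrr /=; apply: eq_bigr => y _.
by rewrite -mulrA (W_idens y (fun t => (t - mean_id W x) ^+ 2)).
Qed.

Lemma VepsE eps : Veps eps W = var_id W x0.
Proof.
have MI_unif_cap : MI W (@unif R X) = capacity W by rewrite MI_unif capacityE.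
rewrite /Veps /=.
have -> : [set v | exists Q, [/\ is_dist Q, MI W Q = capacity W & v = Vcond W Q]]%classic
    = [set var_id W x0]%classic.
  apply/seteqP; split => [v [Q [Q_dist MI_cap ->]]|_ ->] /=.
    exact: Vcond_capacity_achieving.
  exists (@unif R X); split; [exact: unif_dist | exact: MI_unif_cap |].
  by rewrite (Vcond_capacity_achieving unif_dist MI_unif_cap).
by case: ifP => _; rewrite ?inf1 ?sup1.
Qed.
End Capacity.

Theorem lemma10 (R : realType) (X Y : finType) (W : X -> Y -> R)
  (HW : is_channel W) (Hsym : gallager_symmetric W) (Hsing : singular W)
  (Hcol : no_zero_column W) (xo : X) (eps : R) (Heps0 : 0 < eps) (Heps1 : eps < 1) :
  (* (i) *)
  (forall (x : X) (lam : R), mgf W x lam = mgf W xo lam) /\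
  (* (ii) *)
  ((forall x : X, mean_id W x = mean_id W xo) /\ mean_id W xo = capacity W /\
   (forall x : X, var_id W x = var_id W xo) /\ var_id W xo = Veps eps W /\
   (forall x : X, m3 W x = m3 W xo)) /\
  (* (iii) *)
  (forall (N : nat) (Rt : R), 0 <= Rt ->
     forall (f : @fb_encoder X Y N (msg_card N Rt)) (m : 'I_(msg_card N Rt)),
       \sum_(y : N.-tuple Y | Sset W Rt y) fb_law W f m y
       = \sum_(y : N.-tuple Y | Sset W Rt y) memoryless W [tuple of nseq N xo] y) /\
  (* (iv) *)
  (\sum_(y : Y) qunif W y * (- ln (alpha W y)) = capacity W /\
   \sum_(y : Y) qunif W y * (- ln (alpha W y) - capacity W) ^+ 2 = var_id W xo /\
   \sum_(y : Y) qunif W y * `|- ln (alpha W y) - capacity W| ^+ 3 = m3 W xo).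
Proof.
have row_indep x := sum_row_idens_indep HW Hsing Hsym x xo.
have q_stat := sum_qunif_ln_alpha HW Hsing Hsym xo.
have capE : capacity W = mean_id W xo := capacityE HW Hsing Hsym Hcol xo.
split; first by move=> x lam; exact: (row_indep x (fun t => expR (lam * t))).
split.
  split; first by move=> x; exact: mean_id_indep HW Hsing Hsym x xo.
  split; first by rewrite capE.
  split; first by move=> x; exact: var_id_indep HW Hsing Hsym x xo.
  split; first by rewrite (VepsE HW Hsing Hsym Hcol xo).
  by move=> x; exact: (row_indep x (fun t => `|t - capacity W| ^+ 3)).
split; first by move=> N Rt _ f m; exact: sum_Sset_fb_law_memoryless.
split; first by rewrite (q_stat (fun t => t)) capE.
split; first by rewrite (q_stat (fun t => (t - capacity W) ^+ 2)) capE.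
exact: (q_stat (fun t => `|t - capacity W| ^+ 3)).
Qed.
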